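(* Let $m_1,m_2,m_3>0$ with $m_1+m_2+m_3=1$, and let $$\mathcal V=\{(m_1,m_2)\in(0,1)\times(0,1):\ m_1^2m_2^2+m_1^2m_3^2+m_2^2m_3^2-2m_1m_2m_3<0\},\qquad m_3=1-m_1-m_2 .$$ Then there exists an acute triangle fixed-point configuration of the masses $m_1,m_2,m_3$ only for mass triples with $(m_1,m_2)\in\mathcal V$ (and for every such triple one exists). Furthermore, such a configuration is unique.
   Context: Three masses $m_1,m_2,m_3$ are placed on the equator of the unit sphere $\mathbb S^2$ at longitudes $\varphi_1=0$, $\varphi_2=\alpha$, $\varphi_3=\alpha+\beta$, where $(\alpha,\beta)$ lies in $\mathcal U=\{0<\alpha<\pi,\ 0<\beta<\pi,\ \pi<\alpha+\beta<2\pi\}$; then the geodesic distances are $d_{12}=\alpha$, $d_{23}=\beta$, $d_{13}=2\pi-(\alpha+\beta)$ (these three points form an acute triangle in the plane). The force function is $V=\sum_{i<j}m_im_j\cot d_{ij}$ (with $d_{ij}=\arccos(\mathbf q_i\cdot\mathbf q_j)$ the geodesic distance on $\mathbb S^2$), and a fixed point is a configuration that is a critical point of $V$ on $\{(\mathbf q_1,\mathbf q_2,\mathbf q_3)\in(\mathbb S^2)^3: d_{ij}\notin\{0,\pi\}\}$. An acute triangle fixed-point configuration is such a configuration with $(\alpha,\beta)\in\mathcal U$ that is a fixed point; uniqueness refers to uniqueness of $(\alpha,\beta)\in\mathcal U$ (configurations are normalized by $\varphi_1=0<\varphi_2<\varphi_3<2\pi$, any other being obtained from such one by an isometry). *)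

From Stdlib Require Import Reals.
From Coquelicot Require Import Coquelicot.
Open Scope R_scope.

Definition vec3 : Type := (R * R * R)%type.
Definition dot (u v : vec3) : R :=
  let '(u1, u2, u3) := u in let '(v1, v2, v3) := v in u1 * v1 + u2 * v2 + u3 * v3.
Definition vadd (u v : vec3) : vec3 :=
  let '(u1, u2, u3) := u in let '(v1, v2, v3) := v in (u1 + v1, u2 + v2, u3 + v3).
Definition vscal (t : R) (u : vec3) : vec3 :=
  let '(u1, u2, u3) := u in (t * u1, t * u2, t * u3).

Definition on_sphere (q : vec3) : Prop := dot q q = 1.

Definition cot (x : R) : R := cos x / sin x.

Definition gdist (p q : vec3) : R := acos (dot p q).

(* force function V = sum_{i<j} m_i m_j cot d_ij, written via the dot products
   (this is also its natural smooth extension to a neighbourhood of the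
   configuration space in (R^3)^3) *)
Definition forceV (m1 m2 m3 : R) (q1 q2 q3 : vec3) : R :=
  m1 * m2 * cot (gdist q1 q2) + m1 * m3 * cot (gdist q1 q3)
  + m2 * m3 * cot (gdist q2 q3).

Definition nonsingular (q1 q2 q3 : vec3) : Prop :=
  on_sphere q1 /\ on_sphere q2 /\ on_sphere q3 /\
  gdist q1 q2 <> 0 /\ gdist q1 q2 <> PI /\
  gdist q1 q3 <> 0 /\ gdist q1 q3 <> PI /\
  gdist q2 q3 <> 0 /\ gdist q2 q3 <> PI.

(* fixed point: critical point of V on the manifold, i.e. the differential of V
   vanishes on every tangent vector (v1,v2,v3), v_i orthogonal to q_i. *)
Definition fixed_point (m1 m2 m3 : R) (q1 q2 q3 : vec3) : Prop :=
  nonsingular q1 q2 q3 /\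
  forall v1 v2 v3 : vec3,
    dot v1 q1 = 0 -> dot v2 q2 = 0 -> dot v3 q3 = 0 ->
    is_derive (fun t : R =>
                 forceV m1 m2 m3 (vadd q1 (vscal t v1)) (vadd q2 (vscal t v2))
                        (vadd q3 (vscal t v3))) 0 0.

Definition equator (phi : R) : vec3 := (cos phi, sin phi, 0).

Definition inU (a b : R) : Prop :=
  0 < a < PI /\ 0 < b < PI /\ PI < a + b < 2 * PI.

Definition acute_fixed_point (m1 m2 m3 a b : R) : Prop :=
  inU a b /\ fixed_point m1 m2 m3 (equator 0) (equator a) (equator (a + b)).

Definition inV (m1 m2 : R) : Prop :=
  let m3 := 1 - m1 - m2 in
  0 < m1 < 1 /\ 0 < m2 < 1 /\
  m1 ^ 2 * m2 ^ 2 + m1 ^ 2 * m3 ^ 2 + m2 ^ 2 * m3 ^ 2 - 2 * m1 * m2 * m3 < 0.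

From Stdlib Require Import Reals Lra Psatz.
From Coquelicot Require Import Coquelicot.
Open Scope R_scope.

(* Moving a point of the equator off the equator changes no mutual distance to first order, so
   an equatorial configuration is critical iff the "forces" [m_i m_j / sin^2 d_ij], signed by
   [sin d_ij], balance along the circle.  For an acute configuration this says that
   [sin d12 : sin d23 : sin d13 = 1/sqrt m3 : 1/sqrt m1 : 1/sqrt m2].  The supplements of the
   arcs are then the angles of a plane triangle with these side lengths (law of sines), which
   exists iff they satisfy the strict triangle inequalities, i.e. the Heron-type inequality
   defining V; the law of cosines determines the angles, hence uniqueness. *)

Lemma is_derive_acos (c : R) : -1 < c < 1 -> is_derive acos c (- / sqrt (1 - c ^ 2)).
Proof.
  intros Hc. apply is_derive_Reals.
  apply (derive_pt_eq_1 _ _ _ (derivable_pt_acos c Hc)).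
  rewrite derive_pt_acos, Rsqr_pow2. field.
  apply Rgt_not_eq, sqrt_lt_R0. nra.
Qed.

Lemma is_derive_cot (x : R) : sin x <> 0 -> is_derive cot x (- / sin x ^ 2).
Proof.
  intros Hs. unfold cot. auto_derive; [exact Hs|].
  pose proof (sin2_cos2 x) as P. unfold Rsqr in P. field_simplify_eq; [|exact Hs]. nra.
Qed.

Lemma is_derive_cot_acos (c : R) : -1 < c < 1 ->
  is_derive (fun x => cot (acos x)) c (/ sqrt (1 - c ^ 2) ^ 3).
Proof.
  intros Hc.
  assert (Hsin : sin (acos c) = sqrt (1 - c ^ 2)).
  { rewrite sin_acos, Rsqr_pow2; lra. }
  assert (Hpos : 0 < sqrt (1 - c ^ 2)) by (apply sqrt_lt_R0; nra).
  assert (Hd := is_derive_comp cot acos c _ _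
                  (is_derive_cot (acos c) ltac:(lra)) (is_derive_acos c Hc)).
  replace (/ sqrt (1 - c ^ 2) ^ 3) with (scal (- / sqrt (1 - c ^ 2)) (- / sin (acos c) ^ 2)).
  - exact Hd.
  - rewrite Hsin. set (s := sqrt (1 - c ^ 2)) in *.
    unfold scal; simpl; unfold mult; simpl. field. lra.
Qed.

Lemma vadd_vscal_0 (p u : vec3) : vadd p (vscal 0 u) = p.
Proof. destruct p as [[p1 p2] p3], u as [[u1 u2] u3]; simpl; f_equal; [f_equal|]; ring. Qed.

Lemma is_derive_dot_path (p q u w : vec3) :
  is_derive (fun t => dot (vadd p (vscal t u)) (vadd q (vscal t w))) 0 (dot u q + dot p w).
Proof.
  destruct p as [[p1 p2] p3], q as [[q1 q2] q3], u as [[u1 u2] u3], w as [[w1 w2] w3]; simpl.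
  auto_derive; [exact I | ring].
Qed.

Lemma is_derive_cot_gdist_path (p q u w : vec3) : -1 < dot p q < 1 ->
  is_derive (fun t => cot (gdist (vadd p (vscal t u)) (vadd q (vscal t w)))) 0
    ((dot u q + dot p w) / sqrt (1 - dot p q ^ 2) ^ 3).
Proof.
  intros Hpq.
  assert (Hcot : is_derive (fun x => cot (acos x))
                   (dot (vadd p (vscal 0 u)) (vadd q (vscal 0 w)))
                   (/ sqrt (1 - dot p q ^ 2) ^ 3)).
  { rewrite !vadd_vscal_0. exact (is_derive_cot_acos _ Hpq). }
  replace ((dot u q + dot p w) / sqrt (1 - dot p q ^ 2) ^ 3)
    with (scal (dot u q + dot p w) (/ sqrt (1 - dot p q ^ 2) ^ 3)) by reflexivity.
  exact (is_derive_comp _ _ 0 _ _ Hcot (is_derive_dot_path p q u w)).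
Qed.

Lemma is_derive_unique2 (f : R -> R) (x l l' : R) :
  is_derive f x l -> is_derive f x l' -> l = l'.
Proof. intros H H'. rewrite <- (is_derive_unique _ _ _ H). exact (is_derive_unique _ _ _ H'). Qed.

Definition tangent_equator (phi lam z : R) : vec3 := (- lam * sin phi, lam * cos phi, z).

(* Along the equator, [cot] of the arc [d] has derivative [- circle_force d] in [d]; the sign
   of [sin d] accounts for arcs longer than [PI]. *)
Definition circle_force (d : R) : R := sin d / Rabs (sin d) ^ 3.

Lemma circle_force_pos (d : R) : 0 < sin d -> circle_force d = / sin d ^ 2.
Proof. intros Hs. unfold circle_force. rewrite Rabs_pos_eq by lra. field. lra. Qed.

Lemma circle_force_neg (d : R) : sin d < 0 -> circle_force d = - / sin d ^ 2.
Proof. intros Hs. unfold circle_force. rewrite Rabs_left by lra. field. lra. Qed.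

Lemma dot_equator (phi psi : R) : dot (equator phi) (equator psi) = cos (psi - phi).
Proof. unfold equator; simpl. rewrite cos_minus. ring. Qed.

Lemma dot_tangent_equator (phi lam z psi : R) :
  dot (tangent_equator phi lam z) (equator psi) = lam * sin (psi - phi).
Proof. unfold tangent_equator, equator; simpl. rewrite sin_minus. ring. Qed.

Lemma dot_equator_tangent (phi psi lam z : R) :
  dot (equator phi) (tangent_equator psi lam z) = - lam * sin (psi - phi).
Proof. unfold tangent_equator, equator; simpl. rewrite sin_minus. ring. Qed.

Lemma orthogonal_equator (phi : R) (v : vec3) : dot v (equator phi) = 0 ->
  exists lam z, v = tangent_equator phi lam z.
Proof.
  destruct v as [[x y] z]; unfold equator, tangent_equator; simpl. intros Hv.
  pose proof (sin2_cos2 phi) as P; unfold Rsqr in P.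
  exists (y * cos phi - x * sin phi), z.
  repeat f_equal.
  - transitivity (x * (sin phi * sin phi + cos phi * cos phi)
                  - cos phi * (x * cos phi + y * sin phi + z * 0)); [rewrite P, Hv | ]; ring.
  - transitivity (y * (sin phi * sin phi + cos phi * cos phi)
                  - sin phi * (x * cos phi + y * sin phi + z * 0)); [rewrite P, Hv | ]; ring.
Qed.

Lemma cos_bound_lt_of_sin_neq_0 (x : R) : sin x <> 0 -> -1 < cos x < 1.
Proof.
  intros Hs. pose proof (sin2_cos2 x) as P; unfold Rsqr in P.
  assert (0 < sin x * sin x) by (apply Rsqr_pos_lt; exact Hs). nra.
Qed.

Lemma is_derive_cot_gdist_equator (phi psi lam mu z z' : R) : sin (psi - phi) <> 0 ->
  is_derive (fun t => cot (gdist (vadd (equator phi) (vscal t (tangent_equator phi lam z)))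
                                 (vadd (equator psi) (vscal t (tangent_equator psi mu z'))))) 0
    ((lam - mu) * circle_force (psi - phi)).
Proof.
  intros Hs.
  assert (Hc := cos_bound_lt_of_sin_neq_0 _ Hs). rewrite <- dot_equator in Hc.
  replace ((lam - mu) * circle_force (psi - phi))
    with ((dot (tangent_equator phi lam z) (equator psi) + dot (equator phi) (tangent_equator psi mu z'))
          / sqrt (1 - dot (equator phi) (equator psi) ^ 2) ^ 3).
  - exact (is_derive_cot_gdist_path _ _ _ _ Hc).
  - rewrite dot_equator, dot_tangent_equator, dot_equator_tangent, <- Rsqr_pow2,
      <- Rtrigo_facts.sin_cos_Rabs.
    unfold circle_force. field. apply Rabs_no_R0, Hs.
Qed.

Lemma gdist_equator_bounds (phi psi : R) : sin (psi - phi) <> 0 ->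
  gdist (equator phi) (equator psi) <> 0 /\ gdist (equator phi) (equator psi) <> PI.
Proof.
  intros Hs. unfold gdist. rewrite dot_equator.
  pose proof (acos_bound_lt _ (cos_bound_lt_of_sin_neq_0 _ Hs)). lra.
Qed.

Lemma on_sphere_equator (phi : R) : on_sphere (equator phi).
Proof. unfold on_sphere, equator; simpl. pose proof (sin2_cos2 phi); unfold Rsqr in *. lra. Qed.

Section EquatorConfiguration.

Variables (m1 m2 m3 phi1 phi2 phi3 : R).
Hypotheses (H12 : sin (phi2 - phi1) <> 0) (H13 : sin (phi3 - phi1) <> 0)
           (H23 : sin (phi3 - phi2) <> 0).

Lemma is_derive_forceV_equator (l1 l2 l3 z1 z2 z3 : R) :
  is_derive (fun t => forceV m1 m2 m3
                        (vadd (equator phi1) (vscal t (tangent_equator phi1 l1 z1)))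
                        (vadd (equator phi2) (vscal t (tangent_equator phi2 l2 z2)))
                        (vadd (equator phi3) (vscal t (tangent_equator phi3 l3 z3)))) 0
    (m1 * m2 * ((l1 - l2) * circle_force (phi2 - phi1))
     + m1 * m3 * ((l1 - l3) * circle_force (phi3 - phi1))
     + m2 * m3 * ((l2 - l3) * circle_force (phi3 - phi2))).
Proof.
  pose proof (is_derive_scal _ _ (m1 * m2) _ (is_derive_cot_gdist_equator _ _ l1 l2 z1 z2 H12)) as D12.
  pose proof (is_derive_scal _ _ (m1 * m3) _ (is_derive_cot_gdist_equator _ _ l1 l3 z1 z3 H13)) as D13.
  pose proof (is_derive_scal _ _ (m2 * m3) _ (is_derive_cot_gdist_equator _ _ l2 l3 z2 z3 H23)) as D23.
  exact (is_derive_plus _ _ _ _ _ (is_derive_plus _ _ _ _ _ D12 D13) D23).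
Qed.

Lemma nonsingular_equator : nonsingular (equator phi1) (equator phi2) (equator phi3).
Proof.
  destruct (gdist_equator_bounds _ _ H12), (gdist_equator_bounds _ _ H13),
    (gdist_equator_bounds _ _ H23).
  repeat split; auto using on_sphere_equator.
Qed.

Lemma fixed_point_equator_iff :
  fixed_point m1 m2 m3 (equator phi1) (equator phi2) (equator phi3) <->
  m1 * m2 * circle_force (phi2 - phi1) + m1 * m3 * circle_force (phi3 - phi1) = 0 /\
  m2 * m3 * circle_force (phi3 - phi2) = m1 * m2 * circle_force (phi2 - phi1).
Proof.
  set (F12 := circle_force (phi2 - phi1)); set (F13 := circle_force (phi3 - phi1));
    set (F23 := circle_force (phi3 - phi2)).
  assert (Htan : forall phi lam z, dot (tangent_equator phi lam z) (equator phi) = 0).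
  { intros. rewrite dot_tangent_equator, Rminus_diag, sin_0. ring. }
  split.
  - intros [_ Hcrit].
    assert (Hval : forall l1 l2 l3, m1 * m2 * ((l1 - l2) * F12) + m1 * m3 * ((l1 - l3) * F13)
                                    + m2 * m3 * ((l2 - l3) * F23) = 0).
    { intros. apply (is_derive_unique2 _ 0 _ _ (is_derive_forceV_equator l1 l2 l3 0 0 0)).
      apply Hcrit; apply Htan. }
    specialize (Hval 1 0 0) as E1. specialize (Hval 0 1 0) as E2.
    split; lra.
  - intros [E1 E2]. split; [exact nonsingular_equator|].
    intros v1 v2 v3 O1 O2 O3.
    destruct (orthogonal_equator _ _ O1) as [l1 [z1 ->]].
    destruct (orthogonal_equator _ _ O2) as [l2 [z2 ->]].
    destruct (orthogonal_equator _ _ O3) as [l3 [z3 ->]].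
    replace 0 with (m1 * m2 * ((l1 - l2) * F12) + m1 * m3 * ((l1 - l3) * F13)
                    + m2 * m3 * ((l2 - l3) * F23)) at 2.
    + apply is_derive_forceV_equator.
    + (* The force on the third mass is minus the sum of the other two. *)
      transitivity ((l1 - l3) * (m1 * m2 * F12 + m1 * m3 * F13)
                    + (l2 - l3) * (m2 * m3 * F23 - m1 * m2 * F12)); [ring|].
      rewrite E1, E2. ring.
Qed.

End EquatorConfiguration.

Lemma div_sqr_eq_iff (k k' s t : R) : 0 < k -> 0 < k' -> 0 < s -> 0 < t ->
  k / s ^ 2 = k' / t ^ 2 <-> t = sqrt (k' / k) * s.
Proof.
  intros Hk Hk' Hs Ht.
  assert (Hq : 0 <= k' / k) by (apply Rlt_le, Rdiv_lt_0_compat; lra).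
  split.
  - intros E.
    assert (Et : t ^ 2 = k' / k * s ^ 2).
    { replace (k' / k * s ^ 2) with (k' / t ^ 2 * t ^ 2 * s ^ 2 / k) by (field; lra).
      rewrite <- E. field. lra. }
    rewrite <- (sqrt_pow2 t), Et, sqrt_mult_alt, sqrt_pow2; lra.
  - intros ->. rewrite Rpow_mult_distr, pow2_sqrt by exact Hq. field. lra.
Qed.

Lemma fixed_point_acute_iff (m1 m2 m3 a b : R) : 0 < m1 -> 0 < m2 -> 0 < m3 -> inU a b ->
  fixed_point m1 m2 m3 (equator 0) (equator a) (equator (a + b)) <->
  sin b = sqrt (m3 / m1) * sin a /\ - sin (a + b) = sqrt (m3 / m2) * sin a.
Proof.
  intros Hm1 Hm2 Hm3 [Ha [Hb Hab]].
  assert (Hsa : 0 < sin a) by (apply sin_gt_0; lra).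
  assert (Hsb : 0 < sin b) by (apply sin_gt_0; lra).
  assert (HsS : sin (a + b) < 0) by (apply sin_lt_0; lra).
  rewrite fixed_point_equator_iff; replace (a + b - a) with b by ring; rewrite ?Rminus_0_r;
    try lra.
  rewrite (circle_force_pos a), (circle_force_pos b), (circle_force_neg (a + b)) by lra.
  rewrite <- !div_sqr_eq_iff by lra.
  replace ((- sin (a + b)) ^ 2) with (sin (a + b) ^ 2) by ring.
  set (p := / sin a ^ 2); set (q := / sin b ^ 2); set (r := / sin (a + b) ^ 2).
  unfold Rdiv; fold p q r.
  split; intros [E1 E2]; split; nra.
Qed.

Lemma cos_of_sine_ratios (X Y a b : R) : sin a <> 0 ->
  sin b = X * sin a -> - sin (a + b) = Y * sin a ->
  cos b = - (Y + X * cos a) /\ 2 * X * Y * cos a = 1 - X ^ 2 - Y ^ 2.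
Proof.
  intros Ha Eb Eab. rewrite sin_plus, Eb in Eab.
  assert (Ecb : cos b = - (Y + X * cos a)).
  { apply (Rmult_eq_reg_l (sin a)); [lra | exact Ha]. }
  split; [exact Ecb|].
  pose proof (sin2_cos2 a) as Pa; pose proof (sin2_cos2 b) as Pb; unfold Rsqr in Pa, Pb.
  rewrite Eb, Ecb in Pb. nra.
Qed.

Section SineRatios.

Variables X Y : R.
Hypotheses (HX : 0 < X) (HY : 0 < Y).

Lemma sine_ratios_unique (a b a' b' : R) : inU a b -> inU a' b' ->
  sin b = X * sin a -> - sin (a + b) = Y * sin a ->
  sin b' = X * sin a' -> - sin (a' + b') = Y * sin a' ->
  a = a' /\ b = b'.
Proof.
  intros [Ha [Hb _]] [Ha' [Hb' _]] Eb Eab Eb' Eab'.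
  assert (Hsa : sin a <> 0) by (apply Rgt_not_eq, sin_gt_0; lra).
  assert (Hsa' : sin a' <> 0) by (apply Rgt_not_eq, sin_gt_0; lra).
  destruct (cos_of_sine_ratios _ _ _ _ Hsa Eb Eab) as [Cb Ca].
  destruct (cos_of_sine_ratios _ _ _ _ Hsa' Eb' Eab') as [Cb' Ca'].
  assert (Ea : a = a').
  { apply cos_inj; try lra. apply (Rmult_eq_reg_l (2 * X * Y)); [lra | nra]. }
  subst a'. split; [reflexivity|].
  apply cos_inj; lra.
Qed.

Lemma sine_ratios_solvable_iff :
  (exists a b, inU a b /\ sin b = X * sin a /\ - sin (a + b) = Y * sin a) <->
  (1 - X ^ 2 - Y ^ 2) ^ 2 < 4 * X ^ 2 * Y ^ 2.
Proof.
  split.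
  - intros [a [b [[Ha _] [Eb Eab]]]].
    assert (Hsa : 0 < sin a) by (apply sin_gt_0; lra).
    destruct (cos_of_sine_ratios _ _ _ _ (Rgt_not_eq _ _ Hsa) Eb Eab) as [_ Ca].
    pose proof (sin2_cos2 a) as Pa; unfold Rsqr in Pa.
    assert (Hp : 0 < X * Y * sin a) by (repeat apply Rmult_lt_0_compat; lra).
    rewrite <- Ca. nra.
  - intros Htri.
    set (c := (1 - X ^ 2 - Y ^ 2) / (2 * X * Y)).
    assert (Hc : -1 < c < 1).
    { 
      assert (HXY : 0 < X * Y) by (apply Rmult_lt_0_compat; lra).
      assert (Ec : 2 * X * Y * c = 1 - X ^ 2 - Y ^ 2) by (unfold c; field; lra).
      assert (c ^ 2 < 1) by nra. nra. }
    set (cb := - (Y + X * c)).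
    assert (Ecb : 1 - cb ^ 2 = X ^ 2 * (1 - c ^ 2)) by (unfold cb, c; field; lra).
    assert (Hcb : -1 < cb < 1).
    { assert (0 < X ^ 2 * (1 - c ^ 2)) by (apply Rmult_lt_0_compat; nra). nra. }
    set (s := sqrt (1 - c ^ 2)).
    assert (Hs : 0 < s) by (apply sqrt_lt_R0; nra).
    assert (Sa : sin (acos c) = s) by (rewrite sin_acos, Rsqr_pow2; [reflexivity | lra]).
    assert (Sb : sin (acos cb) = X * s).
    { rewrite sin_acos, Rsqr_pow2, Ecb, sqrt_mult_alt, sqrt_pow2; try reflexivity; nra. }
    assert (Sab : - sin (acos c + acos cb) = Y * s).
    { rewrite sin_plus, Sa, Sb, !cos_acos by lra. unfold cb. ring. }
    destruct (acos_bound_lt _ Hc), (acos_bound_lt _ Hcb).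
    exists (acos c), (acos cb). rewrite Sa. repeat split; try lra.
    destruct (Rle_lt_dec (acos c + acos cb) PI) as [Hle|]; [|assumption].
    pose proof (sin_ge_0 (acos c + acos cb) ltac:(lra) Hle). nra.
Qed.

End SineRatios.

Lemma inV_iff_triangle (m1 m2 m3 X Y : R) :
  0 < m1 -> 0 < m2 -> 0 < m3 -> m1 + m2 + m3 = 1 -> X ^ 2 = m3 / m1 -> Y ^ 2 = m3 / m2 ->
  inV m1 m2 <-> (1 - X ^ 2 - Y ^ 2) ^ 2 < 4 * X ^ 2 * Y ^ 2.
Proof.
  intros Hm1 Hm2 Hm3 Hsum HX HY. unfold inV.
  replace (1 - m1 - m2) with m3 by lra. rewrite HX, HY.
  set (Q := m1 ^ 2 * m2 ^ 2 + m1 ^ 2 * m3 ^ 2 + m2 ^ 2 * m3 ^ 2 - 2 * m1 * m2 * m3).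
  assert (Hp : 0 < m1 ^ 2 * m2 ^ 2) by (apply Rmult_lt_0_compat; nra).
  assert (EQ : Q = ((1 - m3 / m1 - m3 / m2) ^ 2 - 4 * (m3 / m1) * (m3 / m2)) * (m1 ^ 2 * m2 ^ 2)).
  { unfold Q. replace (2 * m1 * m2 * m3) with (2 * m1 * m2 * m3 * (m1 + m2 + m3))
      by (rewrite Hsum; ring).
    field. lra. }
  split.
  - intros [_ [_ HQ]]. nra.
  - intros H. repeat split; try lra. nra.
Qed.

Theorem theorem1 (m1 m2 m3 : R) :
  0 < m1 -> 0 < m2 -> 0 < m3 -> m1 + m2 + m3 = 1 ->
  ((exists a b : R, acute_fixed_point m1 m2 m3 a b) <-> inV m1 m2) /\
  (forall a b a' b' : R,
     acute_fixed_point m1 m2 m3 a b -> acute_fixed_point m1 m2 m3 a' b' ->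
     a = a' /\ b = b').
Proof.
  intros Hm1 Hm2 Hm3 Hsum.
  set (X := sqrt (m3 / m1)); set (Y := sqrt (m3 / m2)).
  assert (HX : 0 < X) by (apply sqrt_lt_R0, Rdiv_lt_0_compat; lra).
  assert (HY : 0 < Y) by (apply sqrt_lt_R0, Rdiv_lt_0_compat; lra).
  assert (HX2 : X ^ 2 = m3 / m1) by (apply pow2_sqrt, Rlt_le, Rdiv_lt_0_compat; lra).
  assert (HY2 : Y ^ 2 = m3 / m2) by (apply pow2_sqrt, Rlt_le, Rdiv_lt_0_compat; lra).
  unfold acute_fixed_point. split.
  - rewrite (inV_iff_triangle m1 m2 m3 X Y), <- (sine_ratios_solvable_iff X Y) by assumption.
    split; intros [a [b [HU H]]]; exists a, b; split; try exact HU;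
      revert H; apply fixed_point_acute_iff; assumption.
  - intros a b a' b' [HU H] [HU' H'].
    apply fixed_point_acute_iff in H, H'; try assumption.
    destruct H as [Eb Eab], H' as [Eb' Eab'].
    exact (sine_ratios_unique X Y HX HY a b a' b' HU HU' Eb Eab Eb' Eab').
Qed.
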